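(* Let $G$ be an edge-coloured digraph. Then, in the Hopf algebra $\mathrm{QSym}(x)$, $$\Delta(\mathscr{X}_G(x))=\sum_{F}\mathscr{X}_{G|_{V(G)-V(F)}}(x)\otimes\mathscr{X}_F(x),$$ where the sum runs over all $\{\rightarrow,\Rightarrow\}$-induced subdigraphs $F$ of $G$.
   Context: An edge-coloured digraph is a finite simple digraph $G$ (no loops; for distinct vertices $a,b$ at most one edge from $a$ to $b$) in which every edge is assigned one of three types: dashed ($a\dashrightarrow b$), solid ($a\rightarrow b$) or double ($a\Rightarrow b$). A proper vertex-colouring is $\kappa:V(G)\to\mathbb{P}$ with $\kappa(a)\ne\kappa(b)$ for dashed edges $(a,b)$, $\kappa(a)<\kappa(b)$ for solid edges, $\kappa(a)\le\kappa(b)$ for double edges. The generalized chromatic function is $\mathscr{X}_G(x)=\sum_{\kappa}\prod_{a\in V(G)}x_{\kappa(a)}$, summed over proper vertex-colourings, in commuting variables $x_1,x_2,\dots$ (for the empty digraph it equals $1$). For $A\subseteq V(G)$, $G|_A$ is the induced subdigraph on $A$ (all edges of $G$ with both ends in $A$, with their types). An induced subdigraph $F$ of $G$ (possibly empty or all of $G$) is $\{\rightarrow,\Rightarrow\}$-induced if whenever $a\in V(F)$ and $a\rightarrow b$ or $a\Rightarrow b$ is an edge of $G$, then $b\in V(F)$. $\mathrm{QSym}(x)$ is the algebra of bounded-degree formal power series $f$ such that for every composition $(\alpha_1,\dots,\alpha_k)$ all monomials $x_{i_1}^{\alpha_1}\cdots x_{i_k}^{\alpha_k}$ with $i_1<\dots<i_k$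 have the same coefficient; its coproduct $\Delta$ is obtained by substituting the ordered alphabet $x_1<x_2<\cdots<y_1<y_2<\cdots$ into $f$, writing the result as an element $\sum f_1(x)g_1(y)$ of $\mathrm{QSym}(x)\otimes\mathrm{QSym}(y)$, and identifying $y$ with $x$ to get $\sum f_1\otimes g_1$. *)

From mathcomp Require Import all_boot.
Set Implicit Arguments. Unset Strict Implicit. Unset Printing Implicit Defensive.

(* Edge types: dashed (a -->> b), solid (a -> b), double (a => b). *)
Inductive etype := Dashed | Solid | Double.

Record ecdigraph (V : finType) := ECDigraph {
  edge : V -> V -> option etype;
  edge_noloop : forall a, edge a a = None }.

(* Proper vertex colouring.  Colours are natural numbers 0,1,2,... standing
   for the positive integers 1,2,3,... (order-preserving shift). *)
Definition proper (V : finType) (G : ecdigraph V) (k : V -> nat) : bool :=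
  [forall a, forall b, match edge G a b with
              | Some Dashed => k a != k b
              | Some Solid => k a < k b
              | Some Double => k a <= k b
              | None => true
              end].

(* Formal power series in commuting variables x_0, x_1, ... with nat
   coefficients, given by their coefficient function on monomials.  A monomial
   is a sequence m of exponents: x_0^(m`_0) x_1^(m`_1) ... (trailing zeros are
   irrelevant). *)
Definition series := seq nat -> nat.

(* Coefficient of the monomial m in the generalized chromatic function:
   the number of proper colourings k with #{a | k a = i} = m`_i for all i.
   Every such colouring takes values < size m, so we may enumerate colourings
   into 'I_(size m). *)
Definition chrom (V : finType) (G : ecdigraph V) : series :=
  fun m => #|[set k : {ffun V -> 'I_(size m)} |
               proper G (fun a => nat_of_ord (k a)) &&
               [forall i : 'I_(size m), #|[set a | k a == i]| == nth 0 m i]]|.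

(* QSym: bounded degree, and the coefficient of x_{i1}^{a1} ... x_{ik}^{ak}
   (i1 < ... < ik, all aj > 0) depends only on the composition (a1,...,ak),
   i.e. on the sequence of nonzero exponents in order. *)
Definition compress (m : seq nat) : seq nat := [seq e <- m | 0 < e].

Definition is_qsym (f : series) : Prop :=
  (exists d, forall m, f m <> 0 -> sumn m <= d) /\
  (forall m1 m2, compress m1 = compress m2 -> f m1 = f m2).

(* Coproduct of a quasisymmetric f, as a series in two alphabets
   x_0 < x_1 < ... < y_0 < y_1 < ... : coefficient of x^mx y^my in
   f(x_0, x_1, ..., y_0, y_1, ...).  (QSym(x) (x) QSym(y) is identified with
   its image in the power series in x and y.) *)
Definition Delta (f : series) : seq nat -> seq nat -> nat :=
  fun mx my => f (compress (mx ++ my)).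

Definition induced (V : finType) (G : ecdigraph V) (A : {set V}) :
  ecdigraph {x : V | x \in A} :=
  @ECDigraph _ (fun a b => edge G (val a) (val b))
               (fun a => edge_noloop G (val a)).

(* A is the vertex set of a {->,=>}-induced subdigraph. *)
Definition arrow_closed (V : finType) (G : ecdigraph V) (A : {set V}) : bool :=
  [forall a, forall b, (a \in A) &&
    (match edge G a b with Some Solid | Some Double => true | _ => false end)
    ==> (b \in A)].

(* The coefficient of x^mx y^my in X_G(x, y) counts proper colourings of G
   with content mx ++ my, the colours of mx lying below those of my.  The
   vertices A receiving upper colours are closed under solid and double edges,
   and the colouring is the gluing of a proper colouring of G|_(V - A) with
   content mx and one of G|_A with content my.  Conversely such a pair always
   glues to a proper colouring: an edge between the two parts either goes
   upwards, which every edge type allows, or is a dashed edge out of A.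
   Quasisymmetry holds because properness only sees the relative order of the
   colours, so an empty colour class can be deleted without changing the
   count. *)

From Pilot Require Import Defs.
From mathcomp Require Import all_boot zify.
Set Implicit Arguments. Unset Strict Implicit. Unset Printing Implicit Defensive.

Definition edge_ok (e : option etype) (x y : nat) : bool :=
  match e with
  | Some Dashed => x != y
  | Some Solid => x < y
  | Some Double => x <= y
  | None => true
  end.

Lemma edge_ok_addl e n x y : edge_ok e (n + x) (n + y) = edge_ok e x y.
Proof. by case: e => [[]|] /=; rewrite ?eqn_add2l ?ltn_add2l ?leq_add2l. Qed.

Lemma edge_ok_lt e x y : x < y -> edge_ok e x y.
Proof.
by move=> lt_xy; case: e => [[]|] //=; [rewrite neq_ltn lt_xy | exact: ltnW].
Qed.

Section Proper.
Variable V : finType.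
Implicit Types (G : ecdigraph V) (k : V -> nat).

Lemma properP G k :
  reflect (forall a b, edge_ok (edge G a b) (k a) (k b)) (Defs.proper G k).
Proof.
apply: (iffP forallP) => [Gk a b | Gk a]; first exact: (forallP (Gk a) b).
by apply/forallP => b; apply: Gk.
Qed.

Lemma eq_proper G k1 k2 :
  (forall a b, (k1 a < k1 b) = (k2 a < k2 b)) -> Defs.proper G k1 = Defs.proper G k2.
Proof.
move=> lt12.
have le12 a b : (k1 a <= k1 b) = (k2 a <= k2 b).
  by rewrite (leqNgt (k1 a)) (leqNgt (k2 a)) lt12.
have eq12 a b : (k1 a == k1 b) = (k2 a == k2 b).
  by rewrite (eqn_leq (k1 a)) (eqn_leq (k2 a)) !le12.
apply: eq_forallb => a; apply: eq_forallb => b.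
by case: (edge G a b) => [[]|] /=; rewrite ?eq12 ?lt12 ?le12.
Qed.

Lemma proper_addl G n k : Defs.proper G (fun a => n + k a) = Defs.proper G k.
Proof. by apply: eq_proper => a b; rewrite ltn_add2l. Qed.

End Proper.

Lemma proper_induced (V : finType) (G : ecdigraph V) (A : {set V}) (k : V -> nat) :
  Defs.proper G k -> Defs.proper (induced G A) (fun x => k (val x)).
Proof. by move/properP=> Gk; apply/properP => x y; apply: Gk. Qed.

Definition fibre_card (T : finType) (k : T -> nat) (j : nat) : nat :=
  #|[set a | k a == j]|.

Lemma fibre_card_ord_ge (T : finType) n (k : T -> 'I_n) j :
  n <= j -> fibre_card (fun a => nat_of_ord (k a)) j = 0.
Proof.
move=> le_nj; apply/eqP; rewrite cards_eq0; apply/eqP/setP => a; rewrite !inE.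
by apply/negbTE; rewrite neq_ltn (leq_trans (ltn_ord (k a)) le_nj).
Qed.

Lemma fibre_card_addl (T : finType) n (k : T -> nat) j :
  fibre_card (fun a => n + k a) j = if n <= j then fibre_card k (j - n) else 0.
Proof.
case: leqP => [le_nj | lt_jn].
  by apply: eq_card => a; rewrite !inE -[RHS](eqn_add2l n) subnKC.
apply/eqP; rewrite cards_eq0; apply/eqP/setP => a; rewrite !inE.
by apply/negbTE; rewrite neq_ltn (leq_trans lt_jn (leq_addr _ _)) orbT.
Qed.

Lemma fibre_card_sub (T : finType) (B : {set T}) (k : T -> nat) j :
  fibre_card (fun x : {x | x \in B} => k (val x)) j = #|B :&: [set a | k a == j]|.
Proof.
rewrite /fibre_card -(card_imset _ val_inj); apply: eq_card => a; rewrite !inE.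
apply/imsetP/andP => [[x] | [aB kaj]]; first by rewrite inE => kxj ->; rewrite (valP x).
by exists (Sub a aB); rewrite ?inE.
Qed.

Lemma fibre_card_split (T : finType) (B : {set T}) (k : T -> nat) j :
  fibre_card k j = fibre_card (fun x : {x | x \in ~: B} => k (val x)) j
                   + fibre_card (fun y : {x | x \in B} => k (val y)) j.
Proof.
rewrite !fibre_card_sub /fibre_card -(cardsID B [set a | k a == j]) setDE addnC.
by congr (_ + _); rewrite setIC.
Qed.

Definition has_content (T : finType) (m : seq nat) (k : T -> 'I_(size m)) : bool :=
  [forall i : 'I_(size m), #|[set a | k a == i]| == nth 0 m i].

Definition colourings (V : finType) (G : ecdigraph V) (m : seq nat) :
    {set {ffun V -> 'I_(size m)}} :=
  [set k : {ffun V -> 'I_(size m)} |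
     Defs.proper G (fun a => nat_of_ord (k a)) && has_content k].

Lemma chromE (V : finType) (G : ecdigraph V) (m : seq nat) :
  chrom G m = #|colourings G m|.
Proof. by []. Qed.

Lemma has_contentP (T : finType) (m : seq nat) (k : T -> 'I_(size m)) :
  reflect (forall j, fibre_card (fun a => nat_of_ord (k a)) j = nth 0 m j)
          (has_content k).
Proof.
apply: (iffP forallP) => [km j | km i]; last exact/eqP/km.
have [lt_j | le_j] := ltnP j (size m); first exact/eqP/(km (Ordinal lt_j)).
by rewrite nth_default // fibre_card_ord_ge.
Qed.

Lemma sum_card_fibres (T : finType) n (k : T -> 'I_n) :
  \sum_(i < n) #|[set a | k a == i]| = #|T|.
Proof.
rewrite -sum1_card (partition_big k predT) //=.
by apply: eq_bigr => i _; rewrite -sum1_card; apply: eq_bigl => a; rewrite inE.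
Qed.

Lemma chrom_neq0_sumn (V : finType) (G : ecdigraph V) (m : seq nat) :
  chrom G m != 0 -> sumn m = #|V|.
Proof.
rewrite chromE -lt0n => /card_gt0P [k]; rewrite inE => /andP [_ /forallP km].
rewrite sumnE (big_nth 0) big_mkord -(sum_card_fibres k).
by apply: eq_bigr => i _; rewrite (eqP (km i)).
Qed.

Section Reindex.
Variables (V : finType) (G : ecdigraph V) (m m' : seq nat).
Variable f : 'I_(size m) -> 'I_(size m').
Hypothesis f_mono : forall i j, (f i < f j) = (i < j).
Hypothesis nth_f : forall i, nth 0 m' (f i) = nth 0 m i.
Hypothesis nth_notin_codom : forall j, j \notin codom f -> nth 0 m' j = 0.

Let f_inj : injective f.
Proof.
move=> i j fij; apply/val_inj/eqP.
by rewrite eqn_leq (leqNgt i) (leqNgt j) -!f_mono fij ltnn.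
Qed.

Definition reindex (k : {ffun V -> 'I_(size m)}) : {ffun V -> 'I_(size m')} :=
  [ffun a => f (k a)].

Lemma reindexE k a : reindex k a = f (k a).
Proof. exact: ffunE. Qed.

Lemma reindex_inj : injective reindex.
Proof.
by move=> k1 k2 /ffunP k12; apply/ffunP => a; apply: f_inj; rewrite -!reindexE.
Qed.

Lemma reindex_fibre k i : [set a | reindex k a == f i] = [set a | k a == i].
Proof. by apply/setP => a; rewrite !inE reindexE (inj_eq f_inj). Qed.

Lemma reindex_colourings k : (reindex k \in colourings G m') = (k \in colourings G m).
Proof.
rewrite !inE (@eq_proper _ _ _ (fun a => nat_of_ord (k a))) => [|a b]; last first.
  by rewrite !reindexE f_mono.
congr (_ && _); apply/forallP/forallP => [km i | km j].
  by rewrite -nth_f -reindex_fibre; exact: km.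
have [/codomP [i ->] | j_notin] := boolP (j \in codom f).
  by rewrite reindex_fibre nth_f; exact: km.
rewrite nth_notin_codom // cards_eq0.
apply/eqP/setP => a; rewrite !inE reindexE.
by apply: (contraNF _ j_notin) => /eqP <-; exact: codom_f.
Qed.

Lemma chrom_reindex : chrom G m = chrom G m'.
Proof.
rewrite !chromE -(card_imset _ reindex_inj); apply: eq_card => k'.
apply/imsetP/idP => [[k Gk ->] | Gk']; first by rewrite reindex_colourings.
have k'_codom a : k' a \in codom f.
  apply: contraT => /nth_notin_codom nth0.
  move: Gk'; rewrite inE => /andP [_ /forallP/(_ (k' a))].
  by rewrite nth0 cards_eq0 => /eqP/setP/(_ a); rewrite !inE eqxx.
have k'E : k' = reindex [ffun a => iinv (k'_codom a)].
  by apply/ffunP => a; rewrite reindexE ffunE f_iinv.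
by exists [ffun a => iinv (k'_codom a)]; rewrite // -reindex_colourings -k'E.
Qed.

End Reindex.

Lemma chrom_cat0 (V : finType) (G : ecdigraph V) (s t : seq nat) :
  chrom G (s ++ 0 :: t) = chrom G (s ++ t).
Proof.
have size_ins : size (s ++ 0 :: t) = (size (s ++ t)).+1 by rewrite !size_cat addnS.
have bump_lt (i : 'I_(size (s ++ t))) : bump (size s) i < size (s ++ 0 :: t).
  by rewrite size_ins ltnS /bump; have := ltn_ord i; case: leqP; lia.
symmetry; apply: (@chrom_reindex _ _ _ _ (fun i => Ordinal (bump_lt i))) => /=.
- by move=> i j; rewrite !ltnNge leq_bump2.
- move=> i; rewrite /bump; case: (leqP (size s) i) => [le_si | lt_is].
    by rewrite add1n !nth_cat ltnNge ltnW // ltnNge le_si subSn.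
  by rewrite add0n !nth_cat lt_is.
- move=> j j_notin; have [->|neq_js] := eqVneq (nat_of_ord j) (size s).
    by rewrite nth_cat ltnn subnn.
  have unbump_lt : unbump (size s) j < size (s ++ t).
    have : nat_of_ord j < (size (s ++ t)).+1 by rewrite -size_ins.
    by rewrite /unbump (size_cat s t); case: ltnP; lia.
  case/codomP: j_notin; exists (Ordinal unbump_lt).
  by apply: val_inj; rewrite /= unbumpK ?inE.
Qed.

Lemma chrom_compress (V : finType) (G : ecdigraph V) (m : seq nat) :
  chrom G (compress m) = chrom G m.
Proof.
suff chrom_cat_compress s : chrom G (s ++ compress m) = chrom G (s ++ m).
  exact: (chrom_cat_compress [::]).
elim: m s => [//|[|e] m IHm] s /=; first by rewrite chrom_cat0 IHm.
by rewrite -cat_rcons IHm cat_rcons.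
Qed.

Lemma arrow_closed_ge (V : finType) (G : ecdigraph V) (k : V -> nat) n :
  Defs.proper G k -> arrow_closed G [set a | n <= k a].
Proof.
move/properP=> Gk; apply/forallP => a; apply/forallP => b; apply/implyP.
rewrite !inE => /andP [le_na]; have := Gk a b.
case: (edge G a b) => [[]|] //= Gkab _; apply: leq_trans le_na _ => //.
exact: ltnW.
Qed.

Lemma arrow_closed_edge_ok (V : finType) (G : ecdigraph V) (A : {set V}) a b x y :
  arrow_closed G A -> a \in A -> b \notin A -> y < x -> edge_ok (edge G a b) x y.
Proof.
move=> /forallP/(_ a)/forallP/(_ b)/implyP closedA aA /negbTE bNA lt_yx.
move: closedA; rewrite aA bNA /=.
case: (edge G a b) => [[]|] //= not_arrow; first by rewrite neq_ltn lt_yx orbT.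
all: by have := not_arrow isT.
Qed.

Section Glue.
Variables (V : finType) (A : {set V}) (mx my : seq nat).
Implicit Types (kl : {ffun {x : V | x \in ~: A} -> 'I_(size mx)})
               (ku : {ffun {x : V | x \in A} -> 'I_(size my)}).

Definition glue_nat kl ku (a : V) : nat :=
  if insub a is Some y then size mx + ku y
  else if insub a is Some x then nat_of_ord (kl x) else 0.

Variant glue_spec kl ku (a : V) : nat -> Type :=
  | GlueIn (y : {x : V | x \in A}) of val y = a : glue_spec kl ku a (size mx + ku y)
  | GlueOut (x : {x : V | x \in ~: A}) of val x = a : glue_spec kl ku a (kl x).

Lemma glue_natP kl ku a : glue_spec kl ku a (glue_nat kl ku a).
Proof.
rewrite /glue_nat; case: insubP => [y _ <- | aNA]; first by constructor.
have aCA : a \in ~: A by rewrite inE.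
by rewrite (insubT (fun x => x \in ~: A) aCA); constructor.
Qed.

Lemma glue_nat_lt kl ku a : glue_nat kl ku a < size (mx ++ my).
Proof.
rewrite size_cat; case: glue_natP => [y _ | x _]; first by rewrite ltn_add2l.
exact: leq_trans (ltn_ord _) (leq_addr _ _).
Qed.

Definition glue kl ku : {ffun V -> 'I_(size (mx ++ my))} :=
  [ffun a => Ordinal (glue_nat_lt kl ku a)].

Lemma glueP kl ku a : glue_spec kl ku a (glue kl ku a).
Proof. by rewrite ffunE; apply: glue_natP. Qed.

Lemma glue_in kl ku (y : {x : V | x \in A}) :
  glue kl ku (val y) = size mx + ku y :> nat.
Proof.
case: glueP => [y' /val_inj -> // | x xy].
by have := valP x; rewrite xy inE (valP y).
Qed.

Lemma glue_out kl ku (x : {x : V | x \in ~: A}) : glue kl ku (val x) = kl x :> nat.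
Proof.
case: glueP => [y yx | x' /val_inj -> //].
by have := valP x; rewrite -yx inE (valP y).
Qed.

Lemma glue_inj : injective (fun p => glue p.1 p.2).
Proof.
move=> [kl ku] [kl' ku'] /= /ffunP eq_glue; congr pair; apply/ffunP => x; apply: ord_inj.
  by rewrite -(glue_out kl ku) eq_glue glue_out.
by apply/eqP; rewrite -(eqn_add2l (size mx)) -(glue_in kl ku) -(glue_in kl' ku') eq_glue.
Qed.

Lemma glue_ge kl ku : [set a | size mx <= glue kl ku a] = A.
Proof.
apply/setP => a; rewrite inE; case: glueP => [y <- | x <-].
  by rewrite leq_addr (valP y).
by rewrite leqNgt ltn_ord; apply/esym/negbTE; rewrite -in_setC (valP x).
Qed.

Lemma glue_onto (k : {ffun V -> 'I_(size (mx ++ my))}) :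
  [set a | size mx <= k a] = A -> exists kl ku, k = glue kl ku.
Proof.
move=> kA.
have ge_A a : a \in A -> size mx <= k a by rewrite -kA inE.
have lt_CA a : a \in ~: A -> k a < size mx by rewrite inE -kA inE ltnNge.
have lt_A (y : {x | x \in A}) : k (val y) - size mx < size my.
  by rewrite ltn_subLR ?(ge_A _ (valP y)) // -size_cat.
exists [ffun x => Ordinal (lt_CA _ (valP x))], [ffun y => Ordinal (lt_A y)].
apply/ffunP => a; apply: ord_inj; case: glueP => [y <- | x <-]; rewrite ffunE //=.
by rewrite subnKC // (ge_A _ (valP y)).
Qed.

Lemma proper_glue (G : ecdigraph V) kl ku : arrow_closed G A ->
  Defs.proper G (fun a => nat_of_ord (glue kl ku a)) =
  Defs.proper (induced G (~: A)) (fun x => nat_of_ord (kl x)) &&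
  Defs.proper (induced G A) (fun y => nat_of_ord (ku y)).
Proof.
move=> closedA; apply/idP/andP => [Gk | [/properP G1 /properP G2]].
  split.
    rewrite (@eq_proper _ _ _ (fun x => glue kl ku (val x))).
      exact: (proper_induced (~: A) Gk).
    by move=> x x'; rewrite !glue_out.
  rewrite -(proper_addl _ (size mx)) (@eq_proper _ _ _ (fun y => glue kl ku (val y))).
    exact: (proper_induced A Gk).
  by move=> y y'; rewrite !glue_in.
apply/properP => a b; case: glueP => [ya <- | xa <-]; case: glueP => [yb <- | xb <-].
- by rewrite edge_ok_addl; apply: G2.
- apply: arrow_closed_edge_ok closedA (valP ya) _ _; first by rewrite -in_setC (valP xb).
  by rewrite (leq_trans (ltn_ord (kl xb)) (leq_addr _ _)).
- by apply: edge_ok_lt; rewrite (leq_trans (ltn_ord (kl xa)) (leq_addr _ _)).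
- exact: G1.
Qed.

Lemma glue_content kl ku : has_content (glue kl ku) = has_content kl && has_content ku.
Proof.
have fibre_glue j : fibre_card (fun a => nat_of_ord (glue kl ku a)) j =
    fibre_card (fun x => nat_of_ord (kl x)) j + fibre_card (fun y => size mx + ku y) j.
  rewrite (fibre_card_split A); congr (_ + _); apply: eq_card => x; rewrite !inE.
    by rewrite glue_out.
  by rewrite glue_in.
apply/has_contentP/andP => [glue_m | [/has_contentP kl_m /has_contentP ku_m] j].
  split; apply/has_contentP => j.
    have [lt_j | le_j] := ltnP j (size mx).
      by move: (glue_m j); rewrite fibre_glue fibre_card_addl leqNgt lt_j addn0 nth_cat lt_j.
    by rewrite fibre_card_ord_ge ?nth_default.
  move: (glue_m (size mx + j)); rewrite fibre_glue fibre_card_addl leq_addr addKn.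
  by rewrite fibre_card_ord_ge ?leq_addr // nth_cat ltnNge leq_addr addKn.
rewrite fibre_glue fibre_card_addl nth_cat; case: ltnP => [lt_j | le_j].
  by rewrite addn0 kl_m.
by rewrite fibre_card_ord_ge ?ku_m.
Qed.

Lemma colourings_glue (G : ecdigraph V) : arrow_closed G A ->
  [set k in colourings G (mx ++ my) | [set a | size mx <= k a] == A] =
  [set glue p.1 p.2 | p in setX (colourings (induced G (~: A)) mx)
                                 (colourings (induced G A) my)].
Proof.
move=> closedA; apply/setP => k; rewrite inE.
apply/andP/imsetP => [[Gk /eqP kA] | [[kl ku]]].
  have [kl [ku kE]] := glue_onto kA; subst k.
  move: Gk; rewrite inE proper_glue // glue_content andbACA => Gklu.
  by exists (kl, ku); rewrite // !inE.
rewrite !inE /= => Gklu ->; split; last by rewrite glue_ge.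
by rewrite proper_glue // glue_content andbACA.
Qed.

End Glue.

Lemma chrom_cat (V : finType) (G : ecdigraph V) (mx my : seq nat) :
  chrom G (mx ++ my) =
  \sum_(A : {set V} | arrow_closed G A)
     chrom (induced G (~: A)) mx * chrom (induced G A) my.
Proof.
pose upper (k : {ffun V -> 'I_(size (mx ++ my))}) := [set a | size mx <= k a].
rewrite chromE -sum1_card (partition_big upper (arrow_closed G)) /=.
  apply: eq_bigr => A closedA.
  rewrite !chromE -cardsX -(card_imset _ (@glue_inj _ _ _ _)).
  by rewrite -colourings_glue // -sum1_card; apply: eq_bigl => k; rewrite [in RHS]inE.
by move=> k; rewrite inE => /andP [Gk _]; apply: arrow_closed_ge Gk.
Qed.

Theorem mainTheorem2 (V : finType) (G : ecdigraph V) :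
  is_qsym (chrom G) /\
  forall mx my : seq nat,
    Delta (chrom G) mx my =
    \sum_(A : {set V} | arrow_closed G A)
       chrom (induced G (~: A)) mx * chrom (induced G A) my.
Proof.
split; last by move=> mx my; rewrite /Delta chrom_compress chrom_cat.
split; first by exists #|V| => m /eqP/chrom_neq0_sumn ->.
by move=> m1 m2 compress12; rewrite -chrom_compress compress12 chrom_compress.
Qed.
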